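(* Let $t\geq 2$ be an integer and $H=K_{t,t}$. Then there are a positive constant $c$ and an integer $n_0$ such that for every $n>n_0$, $$\mathrm{IR}(H, K_{1,n}) \leq n + c\, n^{1-\frac{1}{2t}}.$$
   Context: All graphs are finite and simple. $K_{t,t}$ is the complete bipartite graph with both parts of size $t$; $K_{1,n}$ is the star with $n$ edges. For graphs $F$, $H$, $G$, write $F \overset{\text{ind}}{\longrightarrow} (H,G)$ if for every coloring of the edges of $F$ with red and blue there is either a red induced copy of $H$ (a vertex set $S\subseteq V(F)$ with $F[S]\cong H$ and all edges of $F[S]$ red) or a blue induced copy of $G$ (defined analogously with blue). The induced Ramsey number $\mathrm{IR}(H,G)$ is the smallest number of vertices of a graph $F$ with $F \overset{\text{ind}}{\longrightarrow} (H,G)$. *)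

From mathcomp Require Import all_boot.
From Stdlib Require Import Reals.
Set Implicit Arguments. Unset Strict Implicit. Unset Printing Implicit Defensive.

Definition simple_graph (T : finType) (e : rel T) : Prop :=
  symmetric e /\ irreflexive e.

Definition induced_copy (T U : finType) (eF : rel T) (eH : rel U)
  (P : T -> T -> bool) : Prop :=
  exists f : U -> T, injective f /\
    (forall x y, eF (f x) (f y) = eH x y) /\
    (forall x y, eH x y -> P (f x) (f y)).

(* F -ind-> (H, G): every red/blue colouring of the edges of F (a symmetric
   colour function; its values on non-edges are irrelevant) has a red induced
   copy of H or a blue induced copy of G. col x y = true means red. *)
Definition ind_arrow (T U V : finType) (eF : rel T) (eH : rel U) (eG : rel V)
  : Prop :=
  forall col : T -> T -> bool, (forall x y, col x y = col y x) ->
    induced_copy eF eH col \/ induced_copy eF eG (fun x y => ~~ col x y).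

(* IR(H,G) <= m  iff  some graph on m vertices induced-arrows (H,G).
   (Equivalently some graph on at most m vertices, adding isolated vertices.) *)
Definition IR_le (U V : finType) (eH : rel U) (eG : rel V) (m : nat) : Prop :=
  exists eF : rel 'I_m, simple_graph eF /\ ind_arrow eF eH eG.

Definition Ktt_rel (t : nat) : rel ('I_t + 'I_t)%type :=
  fun x y => match x, y with
             | inl _, inr _ | inr _, inl _ => true
             | _, _ => false end.

Definition star_rel (n : nat) : rel (option 'I_n) :=
  fun x y => match x, y with
             | None, Some _ | Some _, None => true
             | _, _ => false end.
Arguments Ktt_rel t : clear implicits.
Arguments star_rel n : clear implicits.

(** The host graph is the complete bipartite graph with parts [A] of size
    [n + K] and [B] of size [s].  In a red/blue colouring, a vertex of [B] with
    [n] blue neighbours is the centre of a blue induced star; otherwise every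
    vertex of [B] has at least [K] red neighbours, and counting pairs
    ([b], [t]-subset of the red neighbourhood of [b]) yields [t] vertices of [A]
    with [t] common red neighbours, i.e. a red induced [K_{t,t}] (both parts
    are independent, so the copies are induced), as soon as
    [(t-1) C(n+K, t) < s C(K, t)].  With [r] the integer [2t]-th root of [n],
    [K ~ r^(2t-1)] and [s ~ (t-1) (r+3)^t] satisfy this, and both are
    [O(r^(2t-1)) = O(n^(1 - 1/(2t)))]. *)
From mathcomp Require Import all_boot zify.
From Stdlib Require Import Reals Lra.
(* Stdlib's Reals rebinds [^] in nat_scope to [Nat.pow]; restore [expn]. *)
Local Notation "m ^ n" := (expn m n) : nat_scope.
Set Implicit Arguments. Unset Strict Implicit. Unset Printing Implicit Defensive.

Lemma leq_expn2r m n e : m <= n -> m ^ e <= n ^ e.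
Proof. by case: e => [|e] // le_mn; rewrite leq_exp2r. Qed.

Lemma ffact_leq_expn n m : n ^_ m <= n ^ m.
Proof.
elim: m n => [|m IHm] n //; rewrite ffactnS expnS leq_mul //.
exact: leq_trans (IHm _) (leq_expn2r _ (leq_pred n)).
Qed.

Lemma expn_leq_ffact n m : (n.+1 - m) ^ m <= n ^_ m.
Proof.
elim: m n => [|m IHm] [|n] //; first by rewrite subSS sub0n exp0n.
by rewrite ffactnS expnS subSS leq_mul ?leq_subr.
Qed.

Lemma exists_nat_root e n : 0 < e -> exists r, r ^ e <= n < r.+1 ^ e.
Proof.
move=> e_gt0; elim: n => [|n [r /andP[le_rn lt_nr]]].
  by exists 0; rewrite exp0n ?exp1n.
have [lt_n1r | le_r1n] := ltnP n.+1 (r.+1 ^ e); first by exists r; rewrite ltnW.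
by exists r.+1; rewrite le_r1n (leq_ltn_trans lt_nr) // ltn_exp2r.
Qed.

Lemma binomial_count_lt t N D q s :
  N <= q * D.+1 -> t.-1 * q ^ t < s -> t.-1 * 'C(N, t) < s * 'C(D + t, t).
Proof.
move=> le_N lt_s; rewrite -(ltn_pmul2r (fact_gt0 t)) -!mulnA !bin_ffact.
apply: leq_ltn_trans (leq_mul (leqnn _) (ffact_leq_expn N t)) _.
apply: leq_ltn_trans (leq_mul (leqnn _) (leq_expn2r t le_N)) _.
apply: (@leq_trans (s * D.+1 ^ t)).
  by rewrite expnMn mulnA ltn_pmul2r ?expn_gt0.
by rewrite leq_mul2l (leq_trans _ (expn_leq_ffact _ _)) ?orbT // -addSn addnK.
Qed.

Section CommonNeighbours.
Variables (A B : finType) (R : B -> {set A}) (t : nat).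

Lemma sum_card_common_draws :
  \sum_(S : {set A} | #|S| == t) #|[set b | S \subset R b]| =
  \sum_b 'C(#|R b|, t).
Proof.
transitivity (\sum_(S : {set A} | #|S| == t) \sum_(b | S \subset R b) 1).
  by apply: eq_bigr => S _; rewrite sum1dep_card.
rewrite (exchange_big_dep xpredT) //=; apply: eq_bigr => b _.
rewrite -cards_draws sum1dep_card; apply: eq_card => S.
by rewrite !inE andbC.
Qed.

Lemma exists_common_draws K :
  (forall b, K <= #|R b|) -> t.-1 * 'C(#|A|, t) < #|B| * 'C(K, t) ->
  exists2 S : {set A}, #|S| = t & t <= #|[set b | S \subset R b]|.
Proof.
move=> le_K_R count.
have [/existsP[S /andP[/eqP card_S many]] | ] :=
  boolP [exists S : {set A}, (#|S| == t) && (t <= #|[set b | S \subset R b]|)].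
  by exists S.
rewrite negb_exists => /forallP few.
suff : #|B| * 'C(K, t) <= t.-1 * 'C(#|A|, t) by rewrite leqNgt count.
apply: (@leq_trans (\sum_b 'C(#|R b|, t))).
  by rewrite -sum_nat_const leq_sum // => b _; rewrite leq_bin2l.
rewrite -sum_card_common_draws.
apply: (@leq_trans (\sum_(S : {set A} | #|S| == t) t.-1)).
  apply: leq_sum => S /eqP card_S.
  by move: (few S); rewrite card_S eqxx /= -ltnNge; case: t.
by rewrite sum_nat_cond_const card_draws mulnC.
Qed.

End CommonNeighbours.

Definition complete_bipartite (A B : finType) : rel (A + B)%type :=
  fun x y => match x, y with
             | inl _, inr _ | inr _, inl _ => true
             | _, _ => false end.
Arguments complete_bipartite A B : clear implicits.

Lemma complete_bipartite_simple (A B : finType) :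
  simple_graph (complete_bipartite A B).
Proof. by split=> [[x|x] [y|y] | [x|x]]. Qed.

Lemma exists_ord_inj_in (A : finType) (S : {set A}) k :
  k <= #|S| -> exists2 f : 'I_k -> A, injective f & forall i, f i \in S.
Proof.
move=> le_kS; exists (fun i => enum_val (widen_ord le_kS i)); last first.
  by move=> i; apply: enum_valP.
by move=> i j /enum_val_inj [] /val_inj.
Qed.

Section InducedCopies.
Variables (T U : finType) (eF : rel T) (eH : rel U) (P : rel T).

Lemma induced_copy_sub (U' : finType) (eH' : rel U') (phi : U -> U') :
  injective phi -> (forall x y, eH' (phi x) (phi y) = eH x y) ->
  induced_copy eF eH' P -> induced_copy eF eH P.
Proof.
move=> phi_inj phi_ind [f [f_inj [f_ind f_P]]].
exists (fun x => f (phi x)); split; first exact: inj_comp.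
split=> x y; first by rewrite f_ind phi_ind.
by rewrite -phi_ind => /f_P.
Qed.

Lemma induced_copy_enum_rank (Q : rel 'I_#|T|) :
  induced_copy eF eH (fun x y => Q (enum_rank x) (enum_rank y)) ->
  induced_copy (fun i j => eF (enum_val i) (enum_val j)) eH Q.
Proof.
move=> [f [f_inj [f_ind f_Q]]]; exists (fun x => enum_rank (f x)).
split; first exact: inj_comp enum_rank_inj f_inj.
by split=> x y /=; rewrite ?enum_rankK // => /f_Q.
Qed.

End InducedCopies.

Lemma IR_le_card (T U V : finType) (eF : rel T) (eH : rel U) (eG : rel V) :
  simple_graph eF -> ind_arrow eF eH eG -> IR_le eH eG #|T|.
Proof.
move=> [eF_sym eF_irr] arrowF.
exists (fun i j => eF (enum_val i) (enum_val j)); split.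
  by split=> [i j | i]; [apply: eF_sym | apply: eF_irr].
move=> col col_sym.
have [red | blue] := arrowF (fun x y => col (enum_rank x) (enum_rank y))
                            (fun x y => col_sym _ _).
  by left; apply: induced_copy_enum_rank.
by right; apply: (induced_copy_enum_rank (Q := fun i j => ~~ col i j)).
Qed.

Lemma induced_copy_complete_bipartite (X Y A B : finType) (P : rel (A + B)%type)
    (f : X -> A) (g : Y -> B) :
  injective f -> injective g -> symmetric P ->
  (forall x y, P (inl (f x)) (inr (g y))) ->
  induced_copy (complete_bipartite A B) (complete_bipartite X Y) P.
Proof.
move=> f_inj g_inj P_sym fg_P.
exists (fun z => match z with inl x => inl (f x) | inr y => inr (g y) end).
split; last split; last by move=> [x|y] [x'|y'] //= _; rewrite P_sym.
  move=> [x|y] [x'|y'] // [eq_img]; first by rewrite (f_inj _ _ eq_img).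
  by rewrite (g_inj _ _ eq_img).
by move=> [x|y] [x'|y'].
Qed.

Definition star_bipartite n (x : option 'I_n) : 'I_n + unit :=
  if x is Some i then inl i else inr tt.

Lemma star_bipartite_induced n :
  injective (@star_bipartite n) /\
  forall x y, complete_bipartite 'I_n unit (star_bipartite x) (star_bipartite y)
              = star_rel n x y.
Proof. by split=> [[x|] [y|] // [->] | [x|] [y|]]. Qed.

Lemma complete_bipartite_arrow (A B : finType) t n :
  t.-1 * 'C(#|A|, t) < #|B| * 'C(#|A| - n, t) ->
  ind_arrow (complete_bipartite A B) (Ktt_rel t) (star_rel n).
Proof.
move=> count col col_sym.
pose red b := [set a | col (inl a) (inr b)].
have [/existsP[b many_blue] | few_blue] := boolP [exists b, n <= #|~: red b|].
  right; have [f f_inj f_blue] := exists_ord_inj_in many_blue.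
  have [phi_inj phi_ind] := star_bipartite_induced n.
  apply: (induced_copy_sub phi_inj phi_ind).
  apply: (induced_copy_complete_bipartite (g := fun=> b) f_inj).
  - by move=> [] [].
  - by move=> x y; rewrite col_sym.
  - by move=> i _; have := f_blue i; rewrite !inE.
left; have many_red b : #|A| - n <= #|red b|.
  move: few_blue; rewrite negb_exists => /forallP /(_ b); rewrite -ltnNge.
  by rewrite -(cardsC (red b)); lia.
have [S card_S many_common] := exists_common_draws many_red count.
have [f f_inj f_S] := exists_ord_inj_in (eq_leq (esym card_S)).
have [g g_inj g_common] := exists_ord_inj_in many_common.
have -> : Ktt_rel t = complete_bipartite 'I_t 'I_t by [].
apply: (induced_copy_complete_bipartite f_inj g_inj col_sym) => i j.
by have := g_common j; rewrite inE => /subsetP /(_ _ (f_S i)); rewrite inE.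
Qed.

Lemma IR_le_Ktt_star t n K s :
  t.-1 * 'C(n + K, t) < s * 'C(K, t) ->
  IR_le (Ktt_rel t) (star_rel n) (n + K + s).
Proof.
move=> count; have := IR_le_card (complete_bipartite_simple 'I_(n + K) 'I_s).
rewrite card_sum !card_ord; apply; apply: complete_bipartite_arrow.
by rewrite !card_ord addKn.
Qed.

Lemma IR_le_Ktt_star_root t n r : 1 < t -> 0 < r -> n < r.+1 ^ (2 * t) ->
  IR_le (Ktt_rel t) (star_rel n)
        (n + (r.+1 ^ (2 * t).-1 + t) + (t.-1 * (r + 3) ^ t).+1).
Proof.
move=> t_gt1 r_gt0 lt_nr; set D := r.+1 ^ (2 * t).-1.
apply: IR_le_Ktt_star; apply: (binomial_count_lt (q := r + 3)) => //.
have le_tD : t <= D.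
  apply/ltnW/(leq_trans (ltn_expl t (ltnSn 1))).
  apply: (@leq_trans (2 ^ (2 * t).-1)); first by rewrite leq_exp2l //; lia.
  exact: leq_expn2r.
have : n < r.+1 * D by rewrite /D -expnS prednK ?muln_gt0 //; lia.
nia.
Qed.

Lemma Ktt_star_root_size_le t r : 1 < t -> 0 < r ->
  r.+1 ^ (2 * t).-1 + t + (t.-1 * (r + 3) ^ t).+1 <= t.+1 * 4 ^ t * r ^ (2 * t).-1.
Proof.
move=> t_gt1 r_gt0; set e := (2 * t).-1.
have re_gt0 : 0 < r ^ e by rewrite expn_gt0 r_gt0.
have le_D : r.+1 ^ e <= 4 ^ t * r ^ e.
  apply: (@leq_trans ((2 * r) ^ e)); first by apply: leq_expn2r; lia.
  rewrite expnMn leq_mul2r -(expnM 2 2) leq_exp2l //; lia.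
have le_q : (r + 3) ^ t <= 4 ^ t * r ^ e.
  apply: (@leq_trans ((4 * r) ^ t)); first by apply: leq_expn2r; lia.
  rewrite expnMn leq_mul2l leq_pexp2l ?orbT //; lia.
have lt_t4 : t < 4 ^ t by apply: ltn_expl.
nia.
Qed.

Lemma INR_expn m k : INR (m ^ k) = (INR m ^ k)%R.
Proof. by elim: k => // k IHk; rewrite expnS -multE mult_INR IHk. Qed.

Lemma pow_pred_le_Rpower (x y : R) k : 0 < k -> (0 < x)%R -> (x ^ k <= y)%R ->
  (x ^ k.-1 <= Rpower y (1 - 1 / INR k))%R.
Proof.
move=> k_gt0 x_gt0 le_xy; rewrite -(prednK k_gt0) /=.
have k_ge1 : (1 <= INR k.-1 + 1)%R by have := pos_INR k.-1; lra.
have -> : (x ^ k.-1 = Rpower (x ^ k.-1.+1) (1 - 1 / INR k.-1.+1))%R.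
  rewrite -!Rpower_pow // Rpower_mult S_INR; congr Rpower; field; lra.
apply: Rle_Rpower_l; last by rewrite prednK //; split; first exact: pow_lt.
have := Rinv_le_contravar _ _ Rlt_0_1 k_ge1; rewrite Rinv_1 S_INR /Rdiv; lra.
Qed.

Theorem lemma4 (t : nat) (ht : (2 <= t)%N) :
  exists (c : R) (n0 : nat), (0 < c)%R /\
    forall n : nat, (n0 < n)%N ->
      exists m : nat, IR_le (Ktt_rel t) (star_rel n) m /\
        (INR m <= INR n + c * Rpower (INR n) (1 - 1 / (2 * INR t)))%R.
Proof.
exists (INR (t.+1 * 4 ^ t)), 0; split.
  by apply/lt_0_INR/ltP; rewrite muln_gt0 expn_gt0.
move=> n n_gt0; have t2_gt0 : 0 < 2 * t by lia.
have [r /andP[le_rn lt_nr]] := exists_nat_root n t2_gt0.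
have r_gt0 : 0 < r by case: r le_rn lt_nr => // _; rewrite exp1n; lia.
eexists; split; first exact: (IR_le_Ktt_star_root ht r_gt0 lt_nr).
apply: (@Rle_trans _ (INR (n + t.+1 * 4 ^ t * r ^ (2 * t).-1))).
  apply/le_INR/leP.
  by rewrite -addnA leq_add2l; apply: Ktt_star_root_size_le.
rewrite -plusE -multE plus_INR mult_INR INR_expn.
apply/Rplus_le_compat_l/Rmult_le_compat_l; first exact: pos_INR.
have -> : (2 * INR t = INR (2 * t))%R by rewrite -multE mult_INR.
apply: pow_pred_le_Rpower; [lia | exact/lt_0_INR/ltP | rewrite -INR_expn].
exact/le_INR/leP.
Qed.
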